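(* Let $(M,\le,\circ,e,\rightharpoonup,\leftharpoonup)$ be a biclosed poset. Then: (1) $\mathsf{Dial}_M(\mathsf{Set})$ is a category. (2) The tensor product $\otimes$ is a bifunctor on it, and together with the unit $I=(\mathbb{1},\mathbb{1},e)$ (where $\mathbb{1}$ is a one-element set) and suitable associator and left/right unitor isomorphisms it makes $\mathsf{Dial}_M(\mathsf{Set})$ a (generally non-symmetric) monoidal category. (3) For all objects $A,B,C$ there are bijections, natural in $A,B,C$, $$\mathrm{Hom}(A\otimes B,C)\cong \mathrm{Hom}(B,A\rightharpoonup C),\qquad \mathrm{Hom}(A\otimes B,C)\cong \mathrm{Hom}(A,C\leftharpoonup B).$$ That is, $\mathsf{Dial}_M(\mathsf{Set})$ is monoidal biclosed.
   Context: A biclosed poset $(M,\le,\circ,e,\rightharpoonup,\leftharpoonup)$ is a partially ordered monoid $(M,\le,\circ,e)$, not necessarily commutative, with $\circ$ monotone in each argument, such that for all $a,b\in M$ the following exist: - $a\rightharpoonup b$, the largest $x\in M$ with $a\circ x\le b$; - $b\leftharpoonup a$, the largest $x\in M$ with $x\circ a\le b$. The category $\mathsf{Dial}_M(\mathsf{Set})$ of dialectica Lambek spaces is defined as follows. - Objects are triples $(U,X,\alpha)$ with $U,X$ sets and $\alpha:U\times X\to M$ a function. - A morphism $(f,F):(U,X,\alpha)\to(V,Y,\beta)$ is a pair of functions $f:U\to V$ and $F:Y\to X$ such that $\alpha(u,F(y))\le\beta(f(u),y)$ for all $u\in U$ and $y\in Y$. - Composition is $(g,G)\circ(f,F)=(g\circ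 f,\;F\circ G)$, and identities are $(\mathrm{id},\mathrm{id})$. Tensor product: $(U,X,\alpha)\otimes(V,Y,\beta)=(U\times V,\;(V\to X)\times(U\to Y),\;\alpha\otimes\beta)$, where $$(\alpha\otimes\beta)((u,v),(h,k))=\alpha(u,h(v))\circ\beta(k(u),v).$$ Here $S\to T$ denotes the set of all functions from $S$ to $T$. On morphisms $(f,F):(U,X,\alpha)\to(U',X',\alpha')$ and $(g,G):(V,Y,\beta)\to(V',Y',\beta')$, the tensor is $$(f,F)\otimes(g,G)=\big(f\times g,\;(h,k)\mapsto(F\circ h\circ g,\;G\circ k\circ f)\big).$$ Internal homs: for $A=(U,X,\alpha)$ and $C=(V,Y,\beta)$, $$A\rightharpoonup C=\big((U\to V)\times(Y\to X),\;U\times Y,\;\alpha\rightharpoonup\beta\big),\qquad (\alpha\rightharpoonup\beta)((h,H),(u,y))=\alpha(u,H(y))\rightharpoonup\beta(h(u),y),$$ $$C\leftharpoonup A=\big((U\to V)\times(Y\to X),\;U\times Y,\;\beta\leftharpoonup\alpha\big),\qquad (\beta\leftharpoonup\alpha)((h,H),(u,y))=\beta(h(u),y)\leftharpoonup\alpha(u,H(y)).$$ *)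

Set Implicit Arguments.
Unset Strict Implicit.

Definition is_largest {T : Type} (le : T -> T -> Prop) (P : T -> Prop) (m : T) : Prop :=
  P m /\ forall x, P x -> le x m.

Record biclosed_poset := BiclosedPoset {
  bp_car :> Type;
  bp_le : bp_car -> bp_car -> Prop;
  bp_le_refl : forall a, bp_le a a;
  bp_le_trans : forall a b c, bp_le a b -> bp_le b c -> bp_le a c;
  bp_le_antisym : forall a b, bp_le a b -> bp_le b a -> a = b;
  bp_mul : bp_car -> bp_car -> bp_car;
  bp_e : bp_car;
  bp_mul_assoc : forall a b c, bp_mul a (bp_mul b c) = bp_mul (bp_mul a b) c;
  bp_mul_e_l : forall a, bp_mul bp_e a = a;
  bp_mul_e_r : forall a, bp_mul a bp_e = a;
  bp_mul_mono_l : forall a a' b, bp_le a a' -> bp_le (bp_mul a b) (bp_mul a' b);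
  bp_mul_mono_r : forall a b b', bp_le b b' -> bp_le (bp_mul a b) (bp_mul a b');
  (* bp_rimp a b = a ⇀ b : the largest x with a ∘ x <= b *)
  bp_rimp : bp_car -> bp_car -> bp_car;
  bp_rimp_largest : forall a b, is_largest bp_le (fun x => bp_le (bp_mul a x) b) (bp_rimp a b);
  (* bp_limp b a = b ↼ a : the largest x with x ∘ a <= b *)
  bp_limp : bp_car -> bp_car -> bp_car;
  bp_limp_largest : forall a b, is_largest bp_le (fun x => bp_le (bp_mul x a) b) (bp_limp b a)
}.

Record dobj (M : biclosed_poset) := DObj {
  dU : Type;
  dX : Type;
  drel : dU -> dX -> bp_car M
}.
Arguments DObj {M} dU dX drel.
Arguments dU {M} d.
Arguments dX {M} d.
Arguments drel {M} d _ _.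

Definition rmor {M : biclosed_poset} (A B : dobj M) : Type :=
  ((dU A -> dU B) * (dX B -> dX A))%type.

Definition is_mor {M : biclosed_poset} {A B : dobj M} (p : rmor A B) : Prop :=
  forall (u : dU A) (y : dX B), @bp_le M (drel A u (snd p y)) (drel B (fst p u) y).

Definition rid {M : biclosed_poset} (A : dobj M) : rmor A A :=
  (fun u => u, fun x => x).

Definition rcomp {M : biclosed_poset} {A B C : dobj M} (g : rmor B C) (f : rmor A B) : rmor A C :=
  (fun u => fst g (fst f u), fun z => snd f (snd g z)).

Definition is_iso {M : biclosed_poset} {A B : dobj M} (f : rmor A B) (g : rmor B A) : Prop :=
  is_mor f /\ is_mor g /\ rcomp g f = rid A /\ rcomp f g = rid B.

Definition tens {M : biclosed_poset} (A B : dobj M) : dobj M :=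
  DObj (dU A * dU B)%type ((dU B -> dX A) * (dU A -> dX B))%type
    (fun uv hk => @bp_mul M (drel A (fst uv) (fst hk (snd uv)))
                           (drel B (snd uv) (snd hk (fst uv)))).

Definition rtens {M : biclosed_poset} {A A' B B' : dobj M}
  (f : rmor A A') (g : rmor B B') : rmor (tens A B) (tens A' B') :=
  (fun uv => (fst f (fst uv), fst g (snd uv)),
   fun hk => (fun v => snd f (fst hk (fst g v)), fun u => snd g (snd hk (fst f u)))).

Definition dI (M : biclosed_poset) : dobj M :=
  DObj unit unit (fun _ _ => @bp_e M).

Definition rhom {M : biclosed_poset} (A C : dobj M) : dobj M :=
  DObj ((dU A -> dU C) * (dX C -> dX A))%type (dU A * dX C)%type
    (fun hH uy => @bp_rimp M (drel A (fst uy) (snd hH (snd uy)))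
                            (drel C (fst hH (fst uy)) (snd uy))).

Definition lhom {M : biclosed_poset} (C A : dobj M) : dobj M :=
  DObj ((dU A -> dU C) * (dX C -> dX A))%type (dU A * dX C)%type
    (fun hH uy => @bp_limp M (drel C (fst hH (fst uy)) (snd uy))
                            (drel A (fst uy) (snd hH (snd uy)))).

Definition rhom_mor {M : biclosed_poset} {A A' C C' : dobj M}
  (a : rmor A' A) (c : rmor C C') : rmor (rhom A C) (rhom A' C') :=
  (fun hH => (fun u' => fst c (fst hH (fst a u')), fun y' => snd a (snd hH (snd c y'))),
   fun uy => (fst a (fst uy), snd c (snd uy))).

Definition lhom_mor {M : biclosed_poset} {A A' C C' : dobj M}
  (c : rmor C C') (a : rmor A' A) : rmor (lhom C A) (lhom C' A') :=
  (fun hH => (fun u' => fst c (fst hH (fst a u')), fun y' => snd a (snd hH (snd c y'))),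
   fun uy => (fst a (fst uy), snd c (snd uy))).

Definition dial_category (M : biclosed_poset) : Prop :=
  (forall A : dobj M, is_mor (rid A)) /\
  (forall (A B C : dobj M) (f : rmor A B) (g : rmor B C),
      is_mor f -> is_mor g -> is_mor (rcomp g f)) /\
  (forall (A B C D : dobj M) (f : rmor A B) (g : rmor B C) (h : rmor C D),
      is_mor f -> is_mor g -> is_mor h ->
      rcomp h (rcomp g f) = rcomp (rcomp h g) f) /\
  (forall (A B : dobj M) (f : rmor A B), is_mor f ->
      rcomp (rid B) f = f /\ rcomp f (rid A) = f).

Definition tens_bifunctor (M : biclosed_poset) : Prop :=
  (forall (A A' B B' : dobj M) (f : rmor A A') (g : rmor B B'),
      is_mor f -> is_mor g -> is_mor (rtens f g)) /\
  (forall A B : dobj M, rtens (rid A) (rid B) = rid (tens A B)) /\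
  (forall (A A' A'' B B' B'' : dobj M) (f : rmor A A') (f' : rmor A' A'')
          (g : rmor B B') (g' : rmor B' B''),
      is_mor f -> is_mor f' -> is_mor g -> is_mor g' ->
      rtens (rcomp f' f) (rcomp g' g) = rcomp (rtens f' g') (rtens f g)).

Definition monoidal_structure (M : biclosed_poset)
  (asc : forall A B C : dobj M, rmor (tens (tens A B) C) (tens A (tens B C)))
  (asc' : forall A B C : dobj M, rmor (tens A (tens B C)) (tens (tens A B) C))
  (lu : forall A : dobj M, rmor (tens (dI M) A) A)
  (lu' : forall A : dobj M, rmor A (tens (dI M) A))
  (ru : forall A : dobj M, rmor (tens A (dI M)) A)
  (ru' : forall A : dobj M, rmor A (tens A (dI M))) : Prop :=
  (forall A B C, is_iso (asc A B C) (asc' A B C)) /\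
  (forall A, is_iso (lu A) (lu' A)) /\
  (forall A, is_iso (ru A) (ru' A)) /\
  (forall (A A' B B' C C' : dobj M) (f : rmor A A') (g : rmor B B') (h : rmor C C'),
      is_mor f -> is_mor g -> is_mor h ->
      rcomp (asc A' B' C') (rtens (rtens f g) h)
      = rcomp (rtens f (rtens g h)) (asc A B C)) /\
  (forall (A A' : dobj M) (f : rmor A A'), is_mor f ->
      rcomp (lu A') (rtens (rid (dI M)) f) = rcomp f (lu A)) /\
  (forall (A A' : dobj M) (f : rmor A A'), is_mor f ->
      rcomp (ru A') (rtens f (rid (dI M))) = rcomp f (ru A)) /\
  (forall A B C D : dobj M,
      rcomp (asc A B (tens C D)) (asc (tens A B) C D)
      = rcomp (rtens (rid A) (asc B C D))
              (rcomp (asc A (tens B C) D) (rtens (asc A B C) (rid D)))) /\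
  (forall A B : dobj M,
      rcomp (rtens (rid A) (lu B)) (asc A (dI M) B) = rtens (ru A) (rid B)).

Definition rhom_functor (M : biclosed_poset) : Prop :=
  (forall (A A' C C' : dobj M) (a : rmor A' A) (c : rmor C C'),
      is_mor a -> is_mor c -> is_mor (rhom_mor a c)) /\
  (forall A C : dobj M, rhom_mor (rid A) (rid C) = rid (rhom A C)) /\
  (forall (A A' A'' C C' C'' : dobj M) (a : rmor A' A) (a' : rmor A'' A')
          (c : rmor C C') (c' : rmor C' C''),
      is_mor a -> is_mor a' -> is_mor c -> is_mor c' ->
      rhom_mor (rcomp a a') (rcomp c' c) = rcomp (rhom_mor a' c') (rhom_mor a c)).

Definition lhom_functor (M : biclosed_poset) : Prop :=
  (forall (A A' C C' : dobj M) (c : rmor C C') (a : rmor A' A),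
      is_mor a -> is_mor c -> is_mor (lhom_mor c a)) /\
  (forall A C : dobj M, lhom_mor (rid C) (rid A) = rid (lhom C A)) /\
  (forall (A A' A'' C C' C'' : dobj M) (a : rmor A' A) (a' : rmor A'' A')
          (c : rmor C C') (c' : rmor C' C''),
      is_mor a -> is_mor a' -> is_mor c -> is_mor c' ->
      lhom_mor (rcomp c' c) (rcomp a a') = rcomp (lhom_mor c' a') (lhom_mor c a)).

Definition right_closed_bij (M : biclosed_poset)
  (phi : forall A B C : dobj M, rmor (tens A B) C -> rmor B (rhom A C))
  (phi' : forall A B C : dobj M, rmor B (rhom A C) -> rmor (tens A B) C) : Prop :=
  (forall A B C (p : rmor (tens A B) C), is_mor p ->
      is_mor (phi A B C p) /\ phi' A B C (phi A B C p) = p) /\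
  (forall A B C (q : rmor B (rhom A C)), is_mor q ->
      is_mor (phi' A B C q) /\ phi A B C (phi' A B C q) = q) /\
  (forall (A A' B B' C C' : dobj M) (a : rmor A' A) (b : rmor B' B) (c : rmor C C')
          (p : rmor (tens A B) C),
      is_mor a -> is_mor b -> is_mor c -> is_mor p ->
      phi A' B' C' (rcomp c (rcomp p (rtens a b)))
      = rcomp (rhom_mor a c) (rcomp (phi A B C p) b)).

Definition left_closed_bij (M : biclosed_poset)
  (psi : forall A B C : dobj M, rmor (tens A B) C -> rmor A (lhom C B))
  (psi' : forall A B C : dobj M, rmor A (lhom C B) -> rmor (tens A B) C) : Prop :=
  (forall A B C (p : rmor (tens A B) C), is_mor p ->
      is_mor (psi A B C p) /\ psi' A B C (psi A B C p) = p) /\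
  (forall A B C (q : rmor A (lhom C B)), is_mor q ->
      is_mor (psi' A B C q) /\ psi A B C (psi' A B C q) = q) /\
  (forall (A A' B B' C C' : dobj M) (a : rmor A' A) (b : rmor B' B) (c : rmor C C')
          (p : rmor (tens A B) C),
      is_mor a -> is_mor b -> is_mor c -> is_mor p ->
      psi A' B' C' (rcomp c (rcomp p (rtens a b)))
      = rcomp (lhom_mor c b) (rcomp (psi A B C p) a)).

(* Every structure map only rearranges tuples on the first components and
   re-curries functions on the second ones, so all equations between morphisms
   hold up to eta.  The order-theoretic content lies in the morphism conditions:
   monotonicity of the product for the tensor, associativity and the unit laws of
   the monoid for the associator and unitors, and the residuation
   a ∘ x <= b <-> x <= a ⇀ b (with its mirror image for ↼) for the internal homs
   and the currying bijections. *)
From Stdlib Require Import FunctionalExtensionality.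

Section BiclosedPoset.
Variable M : biclosed_poset.

Lemma bp_mul_mono (a a' b b' : M) :
  bp_le a a' -> bp_le b b' -> bp_le (bp_mul a b) (bp_mul a' b').
Proof.
  intros Ha Hb. eapply bp_le_trans.
  - apply bp_mul_mono_l, Ha.
  - apply bp_mul_mono_r, Hb.
Qed.

Lemma bp_rimp_adj (a x b : M) : bp_le (bp_mul a x) b <-> bp_le x (bp_rimp a b).
Proof.
  destruct (bp_rimp_largest a b) as [Hres Hmax]. split; intro H.
  - exact (Hmax x H).
  - eapply bp_le_trans; [apply bp_mul_mono_r, H | exact Hres].
Qed.

Lemma bp_limp_adj (a x b : M) : bp_le (bp_mul x a) b <-> bp_le x (bp_limp b a).
Proof.
  destruct (bp_limp_largest a b) as [Hres Hmax]. split; intro H.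
  - exact (Hmax x H).
  - eapply bp_le_trans; [apply bp_mul_mono_l, H | exact Hres].
Qed.

Lemma bp_rimp_mono (a a' b b' : M) :
  bp_le a' a -> bp_le b b' -> bp_le (bp_rimp a b) (bp_rimp a' b').
Proof.
  intros Ha Hb. apply bp_rimp_adj.
  eapply bp_le_trans; [apply bp_mul_mono_l, Ha |].
  eapply bp_le_trans; [apply bp_rimp_adj, bp_le_refl | exact Hb].
Qed.

Lemma bp_limp_mono (a a' b b' : M) :
  bp_le a' a -> bp_le b b' -> bp_le (bp_limp b a) (bp_limp b' a').
Proof.
  intros Ha Hb. apply bp_limp_adj.
  eapply bp_le_trans; [apply bp_mul_mono_r, Ha |].
  eapply bp_le_trans; [apply bp_limp_adj, bp_le_refl | exact Hb].
Qed.

End BiclosedPoset.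

Definition asc {M : biclosed_poset} (A B C : dobj M) :
    rmor (tens (tens A B) C) (tens A (tens B C)) :=
  (fun x => (fst (fst x), (snd (fst x), snd x)),
   fun hk => (fun c => (fun b => fst hk (b, c), fun a => fst (snd hk a) c),
              fun ab => snd (snd hk (fst ab)) (snd ab))).

Definition asc_inv {M : biclosed_poset} (A B C : dobj M) :
    rmor (tens A (tens B C)) (tens (tens A B) C) :=
  (fun x => ((fst x, fst (snd x)), snd (snd x)),
   fun hk => (fun bc => fst (fst hk (snd bc)) (fst bc),
              fun a => (fun c => snd (fst hk c) a, fun b => snd hk (a, b)))).

Definition lunit {M : biclosed_poset} (A : dobj M) : rmor (tens (dI M) A) A :=
  (fun x => snd x, fun y => (fun _ => tt, fun _ => y)).

Definition lunit_inv {M : biclosed_poset} (A : dobj M) : rmor A (tens (dI M) A) :=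
  (fun u => (tt, u), fun hk => snd hk tt).

Definition runit {M : biclosed_poset} (A : dobj M) : rmor (tens A (dI M)) A :=
  (fun x => fst x, fun y => (fun _ => y, fun _ => tt)).

Definition runit_inv {M : biclosed_poset} (A : dobj M) : rmor A (tens A (dI M)) :=
  (fun u => (u, tt), fun hk => fst hk tt).

Definition rcurry {M : biclosed_poset} (A B C : dobj M) (p : rmor (tens A B) C) :
    rmor B (rhom A C) :=
  (fun v => (fun u => fst p (u, v), fun z => fst (snd p z) v),
   fun uz => snd (snd p (snd uz)) (fst uz)).

Definition runcurry {M : biclosed_poset} (A B C : dobj M) (q : rmor B (rhom A C)) :
    rmor (tens A B) C :=
  (fun uv => fst (fst q (snd uv)) (fst uv),
   fun z => (fun v => snd (fst q v) z, fun u => snd q (u, z))).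

Definition lcurry {M : biclosed_poset} (A B C : dobj M) (p : rmor (tens A B) C) :
    rmor A (lhom C B) :=
  (fun u => (fun v => fst p (u, v), fun z => snd (snd p z) u),
   fun vz => fst (snd p (snd vz)) (fst vz)).

Definition luncurry {M : biclosed_poset} (A B C : dobj M) (q : rmor A (lhom C B)) :
    rmor (tens A B) C :=
  (fun uv => fst (fst q (fst uv)) (snd uv),
   fun z => (fun v => snd q (v, z), fun u => snd (fst q u) z)).

Ltac rmor_ext :=
  unfold rcomp, rid, rtens, rhom_mor, lhom_mor, asc, asc_inv, lunit, lunit_inv,
    runit, runit_inv, rcurry, runcurry, lcurry, luncurry;
  repeat (first
    [ progress simpl
    | match goal with x : ?T |- _ => let T' := eval hnf in T in
        match T' with prod _ _ => destruct x | unit => destruct x end end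
    | reflexivity
    | match goal with |- @eq unit ?a ?b => destruct a; destruct b; reflexivity end
    | match goal with |- @eq ?T _ _ => let T' := eval hnf in T in
        match T' with prod _ _ => apply injective_projections end end
    | match goal with |- @eq (forall _, _) _ _ =>
        apply functional_extensionality_dep; intro end ]).

Section Dial.
Variable M : biclosed_poset.
Implicit Types A B C D : dobj M.

Lemma is_mor_rid A : is_mor (rid A).
Proof. intros u y. apply bp_le_refl. Qed.

Lemma is_mor_rcomp A B C (f : rmor A B) (g : rmor B C) :
  is_mor f -> is_mor g -> is_mor (rcomp g f).
Proof. intros Hf Hg u z. eapply bp_le_trans; [apply Hf | apply Hg]. Qed.

Lemma rcomp_assoc A B C D (f : rmor A B) (g : rmor B C) (h : rmor C D) :
  rcomp h (rcomp g f) = rcomp (rcomp h g) f.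
Proof. reflexivity. Qed.

Lemma rcomp_rid_l A B (f : rmor A B) : rcomp (rid B) f = f.
Proof. destruct f. reflexivity. Qed.

Lemma rcomp_rid_r A B (f : rmor A B) : rcomp f (rid A) = f.
Proof. destruct f. reflexivity. Qed.

Lemma dial_is_category : dial_category M.
Proof.
  split; [exact is_mor_rid |]. split; [exact is_mor_rcomp |].
  split; [intros; apply rcomp_assoc |].
  intros A B f _. split; [apply rcomp_rid_l | apply rcomp_rid_r].
Qed.

Lemma is_mor_rtens A A' B B' (f : rmor A A') (g : rmor B B') :
  is_mor f -> is_mor g -> is_mor (rtens f g).
Proof. intros Hf Hg [u v] [h k]. apply bp_mul_mono; [apply Hf | apply Hg]. Qed.

Lemma rtens_rid A B : rtens (rid A) (rid B) = rid (tens A B).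
Proof. rmor_ext. Qed.

Lemma rtens_rcomp A A' A'' B B' B'' (f : rmor A A') (f' : rmor A' A'')
    (g : rmor B B') (g' : rmor B' B'') :
  rtens (rcomp f' f) (rcomp g' g) = rcomp (rtens f' g') (rtens f g).
Proof. reflexivity. Qed.

Lemma tens_is_bifunctor : tens_bifunctor M.
Proof.
  split; [exact is_mor_rtens |]. split; [exact rtens_rid |].
  intros; apply rtens_rcomp.
Qed.

Lemma asc_is_iso A B C : is_iso (asc A B C) (asc_inv A B C).
Proof.
  split; [| split; [| split]].
  - intros [[u v] w] [h k]. simpl. rewrite bp_mul_assoc. apply bp_le_refl.
  - intros [u [v w]] [h k]. simpl. rewrite bp_mul_assoc. apply bp_le_refl.
  - rmor_ext.
  - rmor_ext.
Qed.

Lemma lunit_is_iso A : is_iso (lunit A) (lunit_inv A).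
Proof.
  split; [| split; [| split]].
  - intros [[] u] y. simpl. rewrite bp_mul_e_l. apply bp_le_refl.
  - intros u [h k]. simpl. rewrite bp_mul_e_l. apply bp_le_refl.
  - rmor_ext.
  - rmor_ext.
Qed.

Lemma runit_is_iso A : is_iso (runit A) (runit_inv A).
Proof.
  split; [| split; [| split]].
  - intros [u []] y. simpl. rewrite bp_mul_e_r. apply bp_le_refl.
  - intros u [h k]. simpl. rewrite bp_mul_e_r. apply bp_le_refl.
  - rmor_ext.
  - rmor_ext.
Qed.

Lemma asc_natural A A' B B' C C' (f : rmor A A') (g : rmor B B') (h : rmor C C') :
  rcomp (asc A' B' C') (rtens (rtens f g) h) = rcomp (rtens f (rtens g h)) (asc A B C).
Proof. reflexivity. Qed.

Lemma lunit_natural A A' (f : rmor A A') :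
  rcomp (lunit A') (rtens (rid (dI M)) f) = rcomp f (lunit A).
Proof. reflexivity. Qed.

Lemma runit_natural A A' (f : rmor A A') :
  rcomp (runit A') (rtens f (rid (dI M))) = rcomp f (runit A).
Proof. reflexivity. Qed.

Lemma asc_pentagon A B C D :
  rcomp (asc A B (tens C D)) (asc (tens A B) C D)
  = rcomp (rtens (rid A) (asc B C D))
          (rcomp (asc A (tens B C) D) (rtens (asc A B C) (rid D))).
Proof. reflexivity. Qed.

Lemma asc_triangle A B :
  rcomp (rtens (rid A) (lunit B)) (asc A (dI M) B) = rtens (runit A) (rid B).
Proof. rmor_ext. Qed.

Lemma dial_monoidal :
  monoidal_structure (@asc M) (@asc_inv M) (@lunit M) (@lunit_inv M)
                     (@runit M) (@runit_inv M).
Proof.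
  split; [exact asc_is_iso |]. split; [exact lunit_is_iso |].
  split; [exact runit_is_iso |]. split; [intros; apply asc_natural |].
  split; [intros; apply lunit_natural |]. split; [intros; apply runit_natural |].
  split; [exact asc_pentagon | exact asc_triangle].
Qed.

Lemma is_mor_rhom_mor A A' C C' (a : rmor A' A) (c : rmor C C') :
  is_mor a -> is_mor c -> is_mor (rhom_mor a c).
Proof. intros Ha Hc [h H] [u y]. apply bp_rimp_mono; [apply Ha | apply Hc]. Qed.

Lemma is_mor_lhom_mor A A' C C' (c : rmor C C') (a : rmor A' A) :
  is_mor a -> is_mor c -> is_mor (lhom_mor c a).
Proof. intros Ha Hc [h H] [u y]. apply bp_limp_mono; [apply Ha | apply Hc]. Qed.

Lemma rhom_is_functor : rhom_functor M.
Proof.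
  split; [exact is_mor_rhom_mor |]. split.
  - intros; rmor_ext.
  - reflexivity.
Qed.

Lemma lhom_is_functor : lhom_functor M.
Proof.
  split; [exact is_mor_lhom_mor |]. split.
  - intros; rmor_ext.
  - reflexivity.
Qed.

Lemma is_mor_rcurry A B C (p : rmor (tens A B) C) : is_mor p -> is_mor (rcurry A B C p).
Proof. intros Hp v [u z]. apply bp_rimp_adj, (Hp (u, v) z). Qed.

Lemma is_mor_runcurry A B C (q : rmor B (rhom A C)) : is_mor q -> is_mor (runcurry A B C q).
Proof. intros Hq [u v] z. apply bp_rimp_adj, (Hq v (u, z)). Qed.

Lemma is_mor_lcurry A B C (p : rmor (tens A B) C) : is_mor p -> is_mor (lcurry A B C p).
Proof. intros Hp u [v z]. apply bp_limp_adj, (Hp (u, v) z). Qed.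

Lemma is_mor_luncurry A B C (q : rmor A (lhom C B)) : is_mor q -> is_mor (luncurry A B C q).
Proof. intros Hq [u v] z. apply bp_limp_adj, (Hq u (v, z)). Qed.

Lemma dial_right_closed : right_closed_bij (@rcurry M) (@runcurry M).
Proof.
  split; [| split].
  - intros A B C p Hp. split; [apply is_mor_rcurry, Hp | rmor_ext].
  - intros A B C q Hq. split; [apply is_mor_runcurry, Hq | rmor_ext].
  - intros; rmor_ext.
Qed.

Lemma dial_left_closed : left_closed_bij (@lcurry M) (@luncurry M).
Proof.
  split; [| split].
  - intros A B C p Hp. split; [apply is_mor_lcurry, Hp | rmor_ext].
  - intros A B C q Hq. split; [apply is_mor_luncurry, Hq | rmor_ext].
  - intros; rmor_ext.
Qed.

End Dial.

Theorem theorem1 (M : biclosed_poset) :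
  (* (1) *)
  dial_category M /\
  (* (2) *)
  tens_bifunctor M /\
  (exists (asc : forall A B C : dobj M, rmor (tens (tens A B) C) (tens A (tens B C)))
          (asc' : forall A B C : dobj M, rmor (tens A (tens B C)) (tens (tens A B) C))
          (lu : forall A : dobj M, rmor (tens (dI M) A) A)
          (lu' : forall A : dobj M, rmor A (tens (dI M) A))
          (ru : forall A : dobj M, rmor (tens A (dI M)) A)
          (ru' : forall A : dobj M, rmor A (tens A (dI M))),
      monoidal_structure asc asc' lu lu' ru ru') /\
  (* (3) *)
  rhom_functor M /\ lhom_functor M /\
  (exists (phi : forall A B C : dobj M, rmor (tens A B) C -> rmor B (rhom A C))
          (phi' : forall A B C : dobj M, rmor B (rhom A C) -> rmor (tens A B) C),
      right_closed_bij phi phi') /\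
  (exists (psi : forall A B C : dobj M, rmor (tens A B) C -> rmor A (lhom C B))
          (psi' : forall A B C : dobj M, rmor A (lhom C B) -> rmor (tens A B) C),
      left_closed_bij psi psi').
Proof.
  split; [exact (dial_is_category M) |].
  split; [exact (tens_is_bifunctor M) |].
  split; [do 6 eexists; exact (dial_monoidal M) |].
  split; [exact (rhom_is_functor M) |].
  split; [exact (lhom_is_functor M) |].
  split; do 2 eexists; [exact (dial_right_closed M) | exact (dial_left_closed M)].
Qed.
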